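(* Let $\mathcal{H}$ be a complex Hilbert space and $X:=\mathcal{V}(\mathcal{H})_A\times(0,1)_L$ with the product topology. Let $\Gamma\underline{[0,1]}^{\succeq}$ be the set of functions $\gamma:\mathcal{V}(\mathcal{H})\to[0,1]$ with $\gamma(V')\geq\gamma(V)$ whenever $V'\subseteq V$, partially ordered pointwise. Define $\ell(\gamma)$, a truth value in $\mathrm{Sh}(X)$ (i.e. an open subset of $X$), as the union of the basic open sets ${\downarrow}V'\times(0,r')$ over all pairs $(V',r')$ with $V'\in\mathcal{V}(\mathcal{H})$, $r'\in(0,1]$ and $\gamma(V')\geq r'$. Then $\ell$ is injective, and for every family $(\gamma_i)_{i\in I}$ in $\Gamma\underline{[0,1]}^{\succeq}$ one has $\ell(\bigvee_i\gamma_i)=\bigvee_i\ell(\gamma_i)$, where $(\bigvee_i\gamma_i)(V)=\sup_i\gamma_i(V)$ and the join on the right is the join of truth values (union of open sets).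
   Context: $\mathcal{V}(\mathcal{H})$ is the poset, under inclusion, of non-trivial commutative von Neumann subalgebras of $B(\mathcal{H})$ containing the identity; $\mathcal{V}(\mathcal{H})_A$ is this poset with the topology whose open sets are the lower sets, and ${\downarrow}V:=\{V'\mid V'\subseteq V\}$. $(0,1)_L$ is the set $(0,1)$ with topology consisting of the sets $(0,r)$, $0\leq r\leq1$ (with $(0,0)=\emptyset$). The global elements of the subobject classifier of the sheaf topos $\mathrm{Sh}(X)$ are identified with the open subsets of $X$; equivalently $\ell(\gamma)$ assigns to each basic open $\langle V,r\rangle={\downarrow}V\times(0,r)$ the sieve $\{\langle V',r'\rangle\preceq\langle V,r\rangle\mid\gamma(V')\geq r'\}$, where $\langle V',r'\rangle\preceq\langle V,r\rangle$ iff $V'\subseteq V$ and $r'\leq r$. *)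

From HB Require Import structures.
From mathcomp Require Import all_boot all_order all_algebra.
From mathcomp Require Import complex.
From mathcomp Require Import all_classical all_reals.
Set Implicit Arguments. Unset Strict Implicit. Unset Printing Implicit Defensive.
Import Order.TTheory GRing.Theory Num.Theory.
Local Open Scope ring_scope.
Local Open Scope classical_set_scope.

Section Hilbert.
Variable R : realType.
Local Notation C := (R[i]).
Variable H : lmodType C.
Variable ip : H -> H -> C.

Definition is_inner_product : Prop :=
  [/\ (forall x y z, ip (x + y) z = ip x z + ip y z),
      (forall (a : C) x y, ip (a *: x) y = a * ip x y),
      (forall x y, ip y x = (ip x y)^*),
      (forall x, 0 <= ip x x) &
      (forall x, ip x x = 0 -> x = 0)].

Definition hnorm (x : H) : C := sqrtC (ip x x).

Definition is_complete : Prop :=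
  forall u : nat -> H,
    (forall e : C, 0 < e -> exists N : nat, forall m n : nat,
        (N <= m)%N -> (N <= n)%N -> hnorm (u m - u n) < e) ->
    exists l : H, forall e : C, 0 < e -> exists N : nat, forall n : nat,
        (N <= n)%N -> hnorm (u n - l) < e.

Definition is_complex_hilbert : Prop := is_inner_product /\ is_complete.

Definition is_linear_op (T : H -> H) : Prop :=
  forall (a : C) x y, T (a *: x + y) = a *: T x + T y.

Definition is_bounded_op (T : H -> H) : Prop :=
  is_linear_op T /\ exists M : C, forall x, hnorm (T x) <= M * hnorm x.

Definition is_adjoint (T T' : H -> H) : Prop :=
  forall x y, ip (T x) y = ip x (T' y).

Definition commutant (S : set (H -> H)) : set (H -> H) :=
  [set T | is_bounded_op T /\ forall A, S A -> T \o A = A \o T].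

Definition is_von_neumann (S : set (H -> H)) : Prop :=
  [/\ S `<=` is_bounded_op,
      S id,
      (forall A B, S A -> S B -> S (fun x => A x + B x)),
      (forall (a : C) A, S A -> S (fun x => a *: A x)) &
      (forall A B, S A -> S B -> S (A \o B))] /\
  (forall A, S A -> exists A', S A' /\ is_adjoint A A') /\
  S = commutant (commutant S).

Definition is_commutative_ops (S : set (H -> H)) : Prop :=
  forall A B, S A -> S B -> A \o B = B \o A.

Definition is_nontrivial_ops (S : set (H -> H)) : Prop :=
  S <> [set T | exists a : C, T = (fun x => a *: x)].

Definition is_context (S : set (H -> H)) : Prop :=
  [/\ is_von_neumann S, is_commutative_ops S & is_nontrivial_ops S].

Definition VH : Type := {S : set (H -> H) | is_context S}.

Definition VH_le (V1 V2 : VH) : Prop := proj1_sig V1 `<=` proj1_sig V2.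

(* points of X: pairs (V, s) with s in (0,1); we model subsets of X as sets of pairs *)
Definition Xpt : set (VH * R) := [set p | 0 < p.2 < 1].

Definition basic_open (V : VH) (r : R) : set (VH * R) :=
  [set p | VH_le p.1 V /\ 0 < p.2 < r].

Definition Gamma01 (g : VH -> R) : Prop :=
  (forall V, 0 <= g V <= 1) /\ (forall V V', VH_le V' V -> g V <= g V').

Definition ell (g : VH -> R) : set (VH * R) :=
  \bigcup_(q in [set q : VH * R | 0 < q.2 <= 1 /\ q.2 <= g q.1]) basic_open q.1 q.2.

Definition Gjoin (I : Type) (g : I -> VH -> R) : VH -> R :=
  fun V => sup [set g i V | i in [set: I]].

End Hilbert.

From HB Require Import structures.
From mathcomp Require Import all_boot all_order all_algebra.
From mathcomp Require Import complex.
From mathcomp Require Import all_classical all_reals.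
From mathcomp Require Import lra.
Set Implicit Arguments. Unset Strict Implicit. Unset Printing Implicit Defensive.
Import Order.TTheory GRing.Theory Num.Theory.
Local Open Scope ring_scope.
Local Open Scope classical_set_scope.

(* For an antitone gamma with values in [0,1], the union defining ell(gamma) is
   exactly the strict hypograph {(V, s) | 0 < s < gamma(V)}: antitonicity pushes
   every basic open <V', r'> below the graph, and <V, gamma(V)> covers the fibre
   over V.  A function is recovered from its strict hypograph, and the strict
   hypograph of a pointwise supremum is the union of the strict hypographs. *)

Definition strict_hypograph (R : realType) (T : Type) (f : T -> R) : set (T * R) :=
  [set p | 0 < p.2 < f p.1].

Lemma strict_hypograph_inj (R : realType) (T : Type) (f1 f2 : T -> R) :
  (forall t, 0 <= f1 t) -> (forall t, 0 <= f2 t) ->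
  strict_hypograph f1 = strict_hypograph f2 -> f1 = f2.
Proof.
have lt_hypo (g1 g2 : T -> R) t : 0 <= g1 t -> g1 t < g2 t ->
    strict_hypograph g1 <> strict_hypograph g2.
  move=> g1_ge0 lt12 E.
  have : strict_hypograph g2 (t, (g1 t + g2 t) / 2).
    by rewrite /strict_hypograph /mkset /=; apply/andP; split; lra.
  by rewrite -E => /andP[/= _]; lra.
move=> f1_ge0 f2_ge0 E; apply: funext => t.
have [lt12|lt21|//] := ltgtP (f1 t) (f2 t).
- by case: (lt_hypo _ _ _ (f1_ge0 t) lt12 E).
- by case: (lt_hypo _ _ _ (f2_ge0 t) lt21 (esym E)).
Qed.

Section ell.
Variables (R : realType) (H : lmodType R[i]) (ip : H -> H -> R[i]).

Lemma Gamma01_ge0 (g : VH ip -> R) V : Gamma01 g -> 0 <= g V.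
Proof. by move=> [g01 _]; case/andP: (g01 V). Qed.

Lemma Gamma01_le1 (g : VH ip -> R) V : Gamma01 g -> g V <= 1.
Proof. by move=> [g01 _]; case/andP: (g01 V). Qed.

Lemma ellE (g : VH ip -> R) : Gamma01 g -> ell g = strict_hypograph g.
Proof.
move=> gG; have [_ g_anti] := gG; apply/seteqP; split.
  move=> [V s] [[V' r'] /= [_ rg] [le_VV' /andP[s_gt0 sr]]].
  by rewrite /strict_hypograph /mkset /= s_gt0 /= (lt_le_trans sr) // (le_trans rg) // g_anti.
move=> [V s] /andP[/= s_gt0 sg]; exists (V, g V) => /=.
  by split => //; rewrite (lt_trans s_gt0 sg) Gamma01_le1.
by split => //; rewrite s_gt0.
Qed.

Section Gjoin.
Variables (I : Type) (g : I -> VH ip -> R).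
Hypothesis gG : forall i, Gamma01 (g i).

Lemma Gjoin_ub V i : g i V <= Gjoin g V.
Proof.
apply: ub_le_sup; last by exists i.
by exists 1 => _ [j _ <-]; exact: Gamma01_le1.
Qed.

Lemma Gjoin_ge0 V : 0 <= Gjoin g V.
Proof.
have [E|/set0P[_ [i _ _]]] := eqVneq [set g i V | i in [set: I]] set0.
  by rewrite /Gjoin E sup0.
exact: le_trans (Gamma01_ge0 V (gG i)) (Gjoin_ub V i).
Qed.

(* [0 <= c] covers the empty family, whose supremum is [sup set0 = 0]. *)
Lemma Gjoin_le V c : 0 <= c -> (forall i, g i V <= c) -> Gjoin g V <= c.
Proof.
move=> c_ge0 gc; rewrite /Gjoin.
have [->|/set0P ne] := eqVneq [set g i V | i in [set: I]] set0; first by rewrite sup0.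
by apply: ge_sup => // _ [i _ <-].
Qed.

Lemma Gamma01_Gjoin : Gamma01 (Gjoin g).
Proof.
split=> [V|V V' le_V'V].
  by rewrite Gjoin_ge0 Gjoin_le // => i; exact: Gamma01_le1.
apply: Gjoin_le; first exact: Gjoin_ge0.
by move=> i; apply: le_trans (Gjoin_ub V' i); exact: (gG i).2.
Qed.

Lemma strict_hypograph_Gjoin :
  strict_hypograph (Gjoin g) = \bigcup_(i in [set: I]) strict_hypograph (g i).
Proof.
apply/seteqP; split=> [[V s] /andP[/= s_gt0 s_lt]|[V s] [i _ /andP[/= s_gt0 s_lt]]].
  apply: contrapT => no_i; move: s_lt; apply/negP; rewrite -leNgt.
  apply: Gjoin_le => [|i]; first exact: ltW.
  rewrite leNgt; apply/negP => gs; apply: no_i; exists i => //.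
  by rewrite /strict_hypograph /mkset /= s_gt0.
by rewrite /strict_hypograph /mkset /= s_gt0 (lt_le_trans s_lt (Gjoin_ub V i)).
Qed.

End Gjoin.
End ell.

Theorem mainTheorem7 (R : realType) (H : lmodType R[i]) (ip : H -> H -> R[i])
    (hH : is_complex_hilbert ip) :
  (forall g1 g2 : VH ip -> R, Gamma01 g1 -> Gamma01 g2 ->
      ell g1 = ell g2 -> g1 = g2) /\
  (forall (I : Type) (g : I -> VH ip -> R), (forall i, Gamma01 (g i)) ->
      ell (Gjoin g) = \bigcup_(i in [set: I]) ell (g i)).
Proof.
split=> [g1 g2 G1 G2|I g gG].
  rewrite (ellE G1) (ellE G2).
  by apply: strict_hypograph_inj => V; exact: Gamma01_ge0.
rewrite (ellE (Gamma01_Gjoin gG)) strict_hypograph_Gjoin //.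
by apply: eq_bigcupr => i _; rewrite ellE.
Qed.
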